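(* Let $r>0$, $\varepsilon_0>0$, let $n\ge 0$ be an integer, and let $\varphi_0$ be an axially symmetric external potential, harmonic inside the ball of radius $r$ centered at the origin, whose values on the axis are a polynomial of degree $n$: \[ -\varphi_0(s)=\sum_{i=1}^{n+1} b_i s^{i-1}, \] and set $b_i=0$ for $i>n+1$. Let $\sigma$ be the polynomial of degree at most $n$ on $[-r,r]$ satisfying \[ \int_{-r}^{r}\frac{r\,\sigma(z)}{\sqrt{s^2+r^2-2sz}}\,dz=-2\varepsilon_0\,\varphi_0(s)\qquad(-r<s<r). \] Then for every integer $m\ge 0$ the dipole moment of order $m$, $\mathcal D_m=2\pi r\int_{-r}^{r}z^m\sigma(z)\,dz$, equals \[ \mathcal D_m=2\pi\varepsilon_0\, r^{m+1}\sum_{\substack{i=\delta\\ i\equiv \delta\ (\mathrm{mod}\ 2)}}^{m+1}(2i-1)\,r^{i-1}F_{i,m+1}\,b_i , \] where $\delta=1$ if $m$ is even and $\delta=2$ if $m$ is odd (the sum runs over $i=\delta,\delta+2,\dots$ up to $m+1$), and $F_{ij}=\int_{-1}^{1}P_{i-1}(\eta)\,\eta^{j-1}\,d\eta$ with $P_k$ the Legendre polynomial of degree $k$.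
   Context: Physical setting: a grounded conducting ball of radius $r$ centered at the origin on the axis of an axially symmetric external field with potential $\varphi_0$ ($\varphi_0(s)$ denotes its value at axial coordinate $s$); $\varepsilon_0$ is the electric constant; $\sigma(z)$ is the induced surface charge density as a function of the axial coordinate $z$, and the integral equation expresses cancellation of the external potential inside the ball. *)

From Stdlib Require Import Reals.
From Coquelicot Require Import Coquelicot.
Open Scope R_scope.

(* Legendre polynomials via Bonnet's recurrence:
   P_0 = 1, P_1 = x, (k+2) P_{k+2} = (2k+3) x P_{k+1} - (k+1) P_k. *)
Fixpoint legendre_pair (k : nat) (x : R) : R * R :=
  match k with
  | O => (1, x)
  | S k' =>
      let (p, q) := legendre_pair k' x in
      (q, ((2 * INR k' + 3) * x * q - (INR k' + 1) * p) / (INR k' + 2))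
  end.

Definition legendre (k : nat) (x : R) : R := fst (legendre_pair k x).

Definition Fcoef (i j : nat) : R :=
  RInt (fun eta => legendre (i - 1) eta * eta ^ (j - 1)) (-1) 1.

(* sum of f i over i = d, d+2, d+4, ..., up to (at most) top *)
Definition step2_sum (d top : nat) (f : nat -> R) : R :=
  sum_f_R0 (fun k => f (d + 2 * k)%nat) ((top - d) / 2).

Definition dipole (r : R) (sigma : R -> R) (m : nat) : R :=
  2 * PI * r * RInt (fun z => z ^ m * sigma z) (-r) r.

Definition delta (m : nat) : nat := if Nat.even m then 1%nat else 2%nat.

From Stdlib Require Import Reals Lra Lia.
From Coquelicot Require Import Coquelicot.
Open Scope R_scope.

(* Writing s = r t, the kernel r / sqrt (s^2 + r^2 - 2 s z) is 1 / sqrt (1 + t^2 - 2 t x)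
   with x = z / r, the generating function of the Legendre polynomials: for |t| <= 1/2 it
   equals sum_(k <= N) P_k(x) t^k up to O(t^(N+1)), uniformly in x in [-1, 1].  Hence both
   sides of the integral equation are polynomials in t agreeing to order N, which forces
   int sigma(z) P_k(z / r) dz = 2 eps0 b_(k+1) r^k.  Expanding z^m = r^m (z / r)^m in the
   Legendre basis, whose coefficients are (2k+1)/2 F_(k+1,m+1) by orthogonality, turns D_m
   into a combination of these moments; F_(k+1,m+1) vanishes by parity when k + m is odd,
   which leaves the sum over i = delta, delta + 2, ... *)

Lemma nat_ind2 (P : nat -> Prop) :
  P 0%nat -> P 1%nat -> (forall k, P k -> P (S k) -> P (S (S k))) -> forall k, P k.
Proof.
  intros H0 H1 HS k.
  enough (P k /\ P (S k)) by tauto.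
  induction k as [|k [Hk HSk]]; auto.
Qed.

Lemma legendre_0 x : legendre 0 x = 1.
Proof. reflexivity. Qed.

Lemma legendre_1 x : legendre 1 x = x.
Proof. reflexivity. Qed.

Lemma legendre_SS k x : legendre (S (S k)) x =
  ((2 * INR k + 3) * x * legendre (S k) x - (INR k + 1) * legendre k x) / (INR k + 2).
Proof. unfold legendre; simpl. destruct (legendre_pair k x); reflexivity. Qed.

Lemma legendre_rec k x : INR (S k) * legendre (S k) x =
  (2 * INR k + 1) * x * legendre k x - INR k * legendre (pred k) x.
Proof.
  destruct k as [|k]; [simpl; rewrite legendre_1, legendre_0; ring|].
  rewrite legendre_SS, !S_INR. pose proof (pos_INR k). simpl. field. lra.
Qed.

Lemma legendre_at_1 k : legendre k 1 = 1.
Proof.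
  induction k as [| |k IH0 IH1] using nat_ind2; try reflexivity.
  rewrite legendre_SS, IH0, IH1. pose proof (pos_INR k). field. lra.
Qed.

Lemma legendre_opp k x : legendre k (- x) = (-1) ^ k * legendre k x.
Proof.
  induction k as [| |k IH0 IH1] using nat_ind2.
  - rewrite !legendre_0. ring.
  - rewrite !legendre_1. ring.
  - rewrite !legendre_SS, IH0, IH1. pose proof (pos_INR k). simpl. field. lra.
Qed.

Lemma Rabs_legendre_le k x : -1 <= x <= 1 -> Rabs (legendre k x) <= 3 ^ k.
Proof.
  intros Hx. assert (Habs : Rabs x <= 1) by (apply Rabs_le; lra).
  induction k as [| |k IH0 IH1] using nat_ind2.
  - rewrite legendre_0, Rabs_R1. simpl. lra.
  - rewrite legendre_1. simpl. lra.
  - pose proof (pos_INR k).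
    assert (Hrec : (INR k + 2) * legendre (S (S k)) x =
      (2 * INR k + 3) * x * legendre (S k) x - (INR k + 1) * legendre k x)
      by (rewrite legendre_SS; field; lra).
    assert (Hle : (INR k + 2) * Rabs (legendre (S (S k)) x) <=
      (2 * INR k + 3) * (Rabs x * Rabs (legendre (S k) x)) + (INR k + 1) * Rabs (legendre k x)).
    { rewrite <- (Rabs_right (INR k + 2)), <- Rabs_mult, Hrec by lra.
      eapply Rle_trans; [apply Rabs_triang|]. rewrite Rabs_Ropp, !Rabs_mult.
      rewrite (Rabs_right (2 * INR k + 3)), (Rabs_right (INR k + 1)) by lra. lra. }
    assert (Rabs x * Rabs (legendre (S k) x) <= 3 ^ S k).
    { rewrite <- (Rmult_1_l (3 ^ S k)). apply Rmult_le_compat; auto using Rabs_pos. }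
    pose proof (pow_le 3 k ltac:(lra)). simpl in *. nra.
Qed.

Lemma sum_f_R0_single (a : nat -> R) k d : (k <= d)%nat ->
  sum_f_R0 (fun j => if Nat.eq_dec j k then a j else 0) d = a k.
Proof.
  intros Hk. induction d as [|d IH].
  - replace k with 0%nat by lia. reflexivity.
  - rewrite tech5. destruct (Nat.eq_dec (S d) k) as [<-|Hne].
    + rewrite sum_eq_R0; [ring|]. intros i Hi. destruct (Nat.eq_dec i (S d)); [lia|reflexivity].
    + rewrite IH by lia. ring.
Qed.

Lemma sum_f_R0_zero_tail (f : nat -> R) n N : (n <= N)%nat ->
  (forall k, (n < k)%nat -> f k = 0) -> sum_f_R0 f N = sum_f_R0 f n.
Proof.
  intros H Hz. induction H as [|N H IH]; [reflexivity|].
  rewrite tech5, IH, Hz by lia. ring.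
Qed.

Definition span (B : nat -> R -> R) (d : nat) (f : R -> R) : Prop :=
  exists c : nat -> R, forall x, f x = sum_f_R0 (fun k => c k * B k x) d.

Section Span.
Variable B : nat -> R -> R.

Lemma span_ext d (f g : R -> R) : (forall x, f x = g x) -> span B d f -> span B d g.
Proof. intros E [c Hc]. exists c. intro x. rewrite <- E. apply Hc. Qed.

Lemma span_plus d f g : span B d f -> span B d g -> span B d (fun x => f x + g x).
Proof.
  intros [c Hc] [e He]. exists (fun k => c k + e k). intro x.
  rewrite Hc, He, <- plus_sum. apply sum_eq. intros; ring.
Qed.

Lemma span_scal d f a : span B d f -> span B d (fun x => a * f x).
Proof.
  intros [c Hc]. exists (fun k => a * c k). intro x.
  rewrite Hc, scal_sum. apply sum_eq. intros; ring.
Qed.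

Lemma span_basis d k : (k <= d)%nat -> span B d (B k).
Proof.
  intros Hk. exists (fun j => if Nat.eq_dec j k then 1 else 0). intro x.
  rewrite <- (sum_f_R0_single (fun j => B j x) k d Hk). apply sum_eq.
  intros j _. destruct (Nat.eq_dec j k); ring.
Qed.

Lemma span_le d d' f : (d <= d')%nat -> span B d f -> span B d' f.
Proof.
  intros Hd [c Hc]. exists (fun k => if Compare_dec.le_lt_dec k d then c k else 0).
  intro x. rewrite (sum_f_R0_zero_tail _ d d' Hd), Hc.
  - apply sum_eq. intros k Hk. destruct (Compare_dec.le_lt_dec k d); [ring|lia].
  - intros k Hk. destruct (Compare_dec.le_lt_dec k d); [lia|ring].
Qed.

Lemma span_sum d D (F : nat -> R -> R) :
  (forall k, (k <= d)%nat -> span B D (F k)) ->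
  span B D (fun x => sum_f_R0 (fun k => F k x) d).
Proof.
  induction d as [|d IH]; intros HF; [apply HF; lia|].
  apply span_plus; [apply IH; auto|apply HF; lia].
Qed.

Lemma span_mul_x d f :
  (forall k, (k <= d)%nat -> span B (S d) (fun x => x * B k x)) ->
  span B d f -> span B (S d) (fun x => x * f x).
Proof.
  intros HB [c Hc].
  apply (span_ext _ (fun x => sum_f_R0 (fun k => c k * (x * B k x)) d)).
  { intro x. rewrite Hc, scal_sum. apply sum_eq. intros; ring. }
  apply span_sum. intros k Hk. apply span_scal, HB, Hk.
Qed.

End Span.

Definition monomial (k : nat) (x : R) : R := x ^ k.

Lemma legendre_span_monomial k : span monomial k (legendre k).
Proof.
  assert (Hx : forall d f, span monomial d f -> span monomial (S d) (fun x => x * f x)).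
  { intros d f. apply span_mul_x. intros j Hj.
    apply (span_ext _ _ (monomial (S j))); [reflexivity|apply span_basis; lia]. }
  induction k as [| |k IH0 IH1] using nat_ind2.
  - apply (span_ext _ _ (monomial 0)); [reflexivity|apply span_basis; lia].
  - apply (span_ext _ _ (monomial 1)); [|apply span_basis; lia].
    intro x. unfold monomial. rewrite legendre_1. ring.
  - eapply span_ext; [intro x; symmetry; apply legendre_SS|].
    apply (span_ext _ _ (fun x => / (INR k + 2) * ((2 * INR k + 3) * (x * legendre (S k) x)
      + - (INR k + 1) * legendre k x))); [intro; unfold Rdiv; ring|].
    apply span_scal, span_plus; apply span_scal; [apply Hx, IH1|apply (span_le _ k); auto].
Qed.

Lemma pow_span_legendre m : span legendre m (fun x => x ^ m).
Proof.
  assert (Hx : forall d f, span legendre d f -> span legendre (S d) (fun x => x * f x)).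
  { intros d f. apply span_mul_x. intros j Hj.
    pose proof (pos_INR j).
    apply (span_ext _ _ (fun x => / (2 * INR j + 1) *
      (INR (S j) * legendre (S j) x + INR j * legendre (pred j) x))).
    { intro x. rewrite legendre_rec. field. lra. }
    apply span_scal, span_plus; apply span_scal, span_basis; lia. }
  induction m as [|m IH].
  - apply (span_ext _ _ (legendre 0)); [reflexivity|apply span_basis; lia].
  - apply (span_ext _ _ (fun x => x * x ^ m)); [reflexivity|apply Hx, IH].
Qed.

Fixpoint legendre_deriv (k : nat) (x : R) : R :=
  match k with
  | O => 0
  | S O => 1
  | S (S k' as k1) => (2 * INR k' + 3) * legendre k1 x + legendre_deriv k' x
  end.

Lemma legendre_deriv_rec k x :
  x * legendre_deriv (S k) x - legendre_deriv k x = INR (S k) * legendre (S k) x.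
Proof.
  induction k as [| |k IH0 IH1] using nat_ind2.
  - simpl. rewrite legendre_1. ring.
  - simpl. rewrite legendre_SS, legendre_1, legendre_0. simpl. field.
  - change (legendre_deriv (S (S (S k))) x)
      with ((2 * INR (S k) + 3) * legendre (S (S k)) x + legendre_deriv (S k) x).
    change (legendre_deriv (S (S k)) x)
      with ((2 * INR k + 3) * legendre (S k) x + legendre_deriv k x).
    pose proof (legendre_rec (S (S k)) x) as Hrec. simpl pred in Hrec.
    rewrite !S_INR in *. rewrite Hrec. nra.
Qed.

Lemma is_derive_legendre k x : is_derive (legendre k) x (legendre_deriv k x).
Proof.
  revert x. induction k as [k IH] using (well_founded_induction Wf_nat.lt_wf). intro x.
  destruct k as [|[|k]].
  - apply (is_derive_ext (fun _ => 1)); [reflexivity|]. auto_derive; reflexivity.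
  - apply (is_derive_ext (fun y => y)); [reflexivity|]. auto_derive; reflexivity.
  - apply (is_derive_ext (fun y => ((2 * INR k + 3) * y * legendre (S k) y
      - (INR k + 1) * legendre k y) / (INR k + 2))); [intro; symmetry; apply legendre_SS|].
    pose proof (IH (S k) ltac:(lia) x) as H1. pose proof (IH k ltac:(lia) x) as H0.
    auto_derive; [repeat split; eexists; eauto|].
    replace (Derive (fun y => legendre (S k) y) x) with (legendre_deriv (S k) x)
      by (symmetry; apply is_derive_unique, H1).
    replace (Derive (fun y => legendre k y) x) with (legendre_deriv k x)
      by (symmetry; apply is_derive_unique, H0).
    assert (E : x * legendre_deriv (S k) x =
      legendre_deriv k x + (INR k + 1) * legendre (S k) x).
    { rewrite <- S_INR, <- legendre_deriv_rec. ring. }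
    change (legendre_deriv (S (S k)) x)
      with ((2 * INR k + 3) * legendre (S k) x + legendre_deriv k x).
    transitivity (((2 * INR k + 3) * legendre (S k) x
      + (2 * INR k + 3) * (x * legendre_deriv (S k) x)
      - (INR k + 1) * legendre_deriv k x) / (INR k + 2)); [unfold Rdiv; ring|].
    rewrite E. pose proof (pos_INR k). field. lra.
Qed.

Lemma ex_derive_legendre k x : ex_derive (legendre k) x.
Proof. eexists. apply is_derive_legendre. Qed.

Lemma Derive_legendre k x : Derive (fun y : R => legendre k y) x = legendre_deriv k x.
Proof. apply is_derive_unique, is_derive_legendre. Qed.

Lemma continuous_legendre k x : continuous (legendre k) x.
Proof. apply (ex_derive_continuous (K:=R_AbsRing) (V:=R_NormedModule)), ex_derive_legendre. Qed.

Lemma continuous_pow n x : continuous (fun y => y ^ n) x.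
Proof.
  apply (ex_derive_continuous (K:=R_AbsRing) (V:=R_NormedModule) (fun y => y ^ n)).
  eexists. apply (is_derive_pow (fun y => y)), (is_derive_id (K:=R_AbsRing)).
Qed.

Lemma continuous_sum_f_R0 (F : nat -> R -> R) N x :
  (forall k, continuous (F k) x) -> continuous (fun y => sum_f_R0 (fun k => F k y) N) x.
Proof.
  intros HF. induction N as [|N IH]; [apply HF|].
  apply (continuous_plus (fun y => sum_f_R0 (fun k => F k y) N) (F (S N))); auto.
Qed.

#[local] Hint Resolve continuous_legendre continuous_pow : core.

Ltac Rcontinuity :=
  repeat match goal with
  | |- forall _, _ => intro
  | |- continuous _ _ => solve [auto]
  | |- continuous (fun _ => ?c) _ => apply continuous_const
  | |- continuous (fun y => y) _ => apply continuous_id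
  | |- continuous (fun y => @?f y + @?g y) _ => apply (continuous_plus f g)
  | |- continuous (fun y => @?f y - @?g y) _ => apply (continuous_minus f g)
  | |- continuous (fun y => @?f y * @?g y) _ => apply (continuous_mult f g)
  | |- continuous (fun y => @?f y / @?g y) _ => apply (continuous_mult f (fun y => / g y))
  | |- continuous (fun y => / @?f y) _ => apply (continuous_Rinv_comp f)
  | |- continuous (fun y => @?f y ^ ?n) _ => apply (continuous_comp f (fun y => y ^ n))
  | |- continuous (fun y => sum_f_R0 (fun k => @?F k y) ?N) _ =>
      apply (continuous_sum_f_R0 F N)
  | |- continuous (fun y => ?h (@?f y)) _ =>
      lazymatch f with (fun y => y) => fail | _ => apply (continuous_comp f h) end
  end.

Lemma is_RInt_Rplus (f g : R -> R) a b u v :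
  is_RInt f a b u -> is_RInt g a b v -> is_RInt (fun x => f x + g x) a b (u + v).
Proof. apply (is_RInt_plus f g). Qed.

Lemma is_RInt_Rminus (f g : R -> R) a b u v :
  is_RInt f a b u -> is_RInt g a b v -> is_RInt (fun x => f x - g x) a b (u - v).
Proof. apply (is_RInt_minus f g). Qed.

Lemma is_RInt_Rscal (f : R -> R) a b c u :
  is_RInt f a b u -> is_RInt (fun x => c * f x) a b (c * u).
Proof. apply (is_RInt_scal f). Qed.

Lemma is_RInt_Rext (f g : R -> R) a b u :
  (forall x, f x = g x) -> is_RInt f a b u -> is_RInt g a b u.
Proof. intros E. apply is_RInt_ext. intros x _. apply E. Qed.

Lemma is_RInt_0 a b : is_RInt (fun _ => 0) a b 0.
Proof.
  pose proof (is_RInt_const (V:=R_NormedModule) a b 0) as H.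
  rewrite (scal_zero_r (V:=R_ModuleSpace)) in H. exact H.
Qed.

Lemma is_RInt_sum_f_R0 (F : nat -> R -> R) a b (v : nat -> R) N :
  (forall k, (k <= N)%nat -> is_RInt (F k) a b (v k)) ->
  is_RInt (fun x => sum_f_R0 (fun k => F k x) N) a b (sum_f_R0 v N).
Proof.
  induction N as [|N IH]; intros HF; [apply HF; lia|].
  apply is_RInt_Rplus; [apply IH; auto|apply HF; lia].
Qed.

Lemma is_RInt_RInt_continuous (f : R -> R) a b :
  (forall x, continuous f x) -> is_RInt f a b (RInt f a b).
Proof. intros Hf. apply (RInt_correct (V:=R_CompleteNormedModule)), ex_RInt_continuous; auto. Qed.

Lemma RInt_Rext_sym (f g : R -> R) r : 0 <= r ->
  (forall z, -r < z < r -> f z = g z) -> RInt f (-r) r = RInt g (-r) r.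
Proof.
  intros Hr E. apply RInt_ext. rewrite Rmin_left, Rmax_right by lra. exact E.
Qed.

Lemma is_RInt_legendre_pow j k : (j < k)%nat -> is_RInt (fun x => legendre k x * x ^ j) (-1) 1 0.
Proof.
  revert k. induction j as [j IH] using (well_founded_induction Wf_nat.lt_wf).
  intros [|k] Hjk; [lia|].
  set (G := fun x => (legendre (S (S k)) x - legendre k x) * x ^ j).
  set (lower := fun x => (legendre (S (S k)) x - legendre k x) * (INR j * x ^ pred j)).
  (* [(P_(k+2) - P_k)' = (2k+3) P_(k+1)], and [G] vanishes at both ends. *)
  assert (HG : is_RInt (fun x => (2 * INR k + 3) * (legendre (S k) x * x ^ j) + lower x)
                 (-1) 1 (G 1 - G (-1))).
  { apply (is_RInt_derive (V:=R_CompleteNormedModule) G); intros x _; unfold G, lower.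
    - auto_derive; [repeat split; apply ex_derive_legendre|].
      rewrite !Derive_legendre. simpl. ring.
    - Rcontinuity. }
  assert (Hends : G 1 - G (-1) = 0).
  { unfold G. replace (-1) with (- (1)) by ring.
    rewrite !legendre_opp, !legendre_at_1. simpl. ring. }
  assert (Hlower : is_RInt lower (-1) 1 0).
  { destruct j as [|j]; unfold lower.
    - apply (is_RInt_Rext (fun _ => 0)); [intro; simpl; ring|apply is_RInt_0].
    - replace 0 with (INR (S j) * (0 - 0)) by ring.
      apply (is_RInt_Rext (fun x => INR (S j) *
        (legendre (S (S k)) x * x ^ j - legendre k x * x ^ j))); [intro; simpl; ring|].
      apply is_RInt_Rscal, is_RInt_Rminus; apply IH; lia. }
  rewrite Hends in HG.
  pose proof (pos_INR k).
  replace 0 with (/ (2 * INR k + 3) * (0 - 0)) by ring.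
  apply (is_RInt_Rext (fun x => / (2 * INR k + 3) *
    ((2 * INR k + 3) * (legendre (S k) x * x ^ j) + lower x - lower x))).
  { intro x. field. lra. }
  apply is_RInt_Rscal, is_RInt_Rminus; assumption.
Qed.

Lemma is_RInt_legendre_span d f k : span monomial d f -> (d < k)%nat ->
  is_RInt (fun x => legendre k x * f x) (-1) 1 0.
Proof.
  intros [c Hc] Hdk.
  replace 0 with (sum_f_R0 (fun j => c j * 0) d) by (apply sum_eq_R0; intros; ring).
  apply (is_RInt_Rext (fun x => sum_f_R0 (fun j => c j * (legendre k x * x ^ j)) d)).
  { intro x. rewrite Hc, scal_sum. apply sum_eq. intros. unfold monomial. ring. }
  apply is_RInt_sum_f_R0. intros j Hj. apply is_RInt_Rscal, is_RInt_legendre_pow. lia.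
Qed.

Lemma is_RInt_legendre_orth j k : j <> k ->
  is_RInt (fun x => legendre k x * legendre j x) (-1) 1 0.
Proof.
  intros Hjk. destruct (proj1 (Nat.lt_gt_cases j k) Hjk) as [Hlt|Hgt].
  - apply (is_RInt_legendre_span j); [apply legendre_span_monomial|exact Hlt].
  - apply (is_RInt_Rext (fun x => legendre j x * legendre k x)); [intro; ring|].
    apply (is_RInt_legendre_span k); [apply legendre_span_monomial|exact Hgt].
Qed.

Lemma is_RInt_legendre_sqr k :
  is_RInt (fun x => legendre k x * legendre k x) (-1) 1 (2 / (2 * INR k + 1)).
Proof.
  induction k as [|k IH].
  - apply (is_RInt_Rext (fun _ => 1)); [intro; rewrite legendre_0; ring|].
    pose proof (is_RInt_const (V:=R_NormedModule) (-1) 1 1) as H.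
    replace (2 / (2 * INR 0 + 1)) with (scal (1 - -1) 1) by (cbn; field). exact H.
  - pose proof (pos_INR k).
    (* [x P_(k+1) = ((k+2) P_(k+2) + (k+1) P_k) / (2k+3)] *)
    assert (Hx : is_RInt (fun x => legendre k x * (x * legendre (S k) x)) (-1) 1
                   ((INR k + 1) / (2 * INR k + 3) * (2 / (2 * INR k + 1)))).
    { replace ((INR k + 1) / (2 * INR k + 3) * (2 / (2 * INR k + 1))) with
        ((INR k + 2) / (2 * INR k + 3) * 0
         + (INR k + 1) / (2 * INR k + 3) * (2 / (2 * INR k + 1))) by ring.
      apply (is_RInt_Rext (fun x =>
        (INR k + 2) / (2 * INR k + 3) * (legendre (S (S k)) x * legendre k x)
        + (INR k + 1) / (2 * INR k + 3) * (legendre k x * legendre k x))).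
      { intro x. pose proof (legendre_rec (S k) x) as Hrec. simpl pred in Hrec.
        rewrite !S_INR in Hrec.
        replace (x * legendre (S k) x) with (((INR k + 2) * legendre (S (S k)) x
          + (INR k + 1) * legendre k x) / (2 * INR k + 3)); [field; lra|].
        replace (INR k + 2) with (INR k + 1 + 1) by ring. rewrite Hrec. field. lra. }
      apply is_RInt_Rplus; apply is_RInt_Rscal; [apply is_RInt_legendre_orth; lia|exact IH]. }
    replace (2 / (2 * INR (S k) + 1)) with
      (/ (INR k + 1) * ((2 * INR k + 1) * ((INR k + 1) / (2 * INR k + 3) * (2 / (2 * INR k + 1)))
        - INR k * 0)) by (rewrite S_INR; field; lra).
    apply (is_RInt_Rext (fun x =>
      / (INR k + 1) * ((2 * INR k + 1) * (legendre k x * (x * legendre (S k) x))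
      - INR k * (legendre (S k) x * legendre (pred k) x)))).
    { intro x. pose proof (legendre_rec k x) as Hrec. rewrite S_INR in Hrec.
      replace (legendre (S k) x * legendre (S k) x) with
        (/ (INR k + 1) * (((INR k + 1) * legendre (S k) x) * legendre (S k) x)) by (field; lra).
      rewrite Hrec. ring. }
    apply is_RInt_Rscal, is_RInt_Rminus; apply is_RInt_Rscal;
      [exact Hx|apply is_RInt_legendre_orth; lia].
Qed.

Lemma legendre_expansion d f : span legendre d f -> forall x,
  f x = sum_f_R0 (fun k =>
    (2 * INR k + 1) / 2 * RInt (fun y => legendre k y * f y) (-1) 1 * legendre k x) d.
Proof.
  intros [c Hc] x. rewrite Hc. apply sum_eq. intros k Hk. f_equal.
  assert (Hcoef : is_RInt (fun y => legendre k y * f y) (-1) 1 (c k * (2 / (2 * INR k + 1)))).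
  { rewrite <- (sum_f_R0_single (fun j => c j * (2 / (2 * INR j + 1))) k d Hk).
    apply (is_RInt_Rext (fun y => sum_f_R0 (fun j => c j * (legendre k y * legendre j y)) d)).
    { intro y. rewrite Hc, scal_sum. apply sum_eq. intros; ring. }
    apply is_RInt_sum_f_R0. intros j Hj. destruct (Nat.eq_dec j k) as [->|Hne].
    - apply is_RInt_Rscal, is_RInt_legendre_sqr.
    - replace 0 with (c j * 0) by ring. apply is_RInt_Rscal, is_RInt_legendre_orth, Hne. }
  rewrite (is_RInt_unique _ _ _ _ Hcoef). pose proof (pos_INR k). field. lra.
Qed.

Lemma Fcoef_S k m : Fcoef (S k) (S m) = RInt (fun x => legendre k x * x ^ m) (-1) 1.
Proof. unfold Fcoef. simpl. rewrite !Nat.sub_0_r. reflexivity. Qed.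

Lemma pow_legendre_expansion m x :
  x ^ m = sum_f_R0 (fun k => (2 * INR k + 1) / 2 * Fcoef (S k) (S m) * legendre k x) m.
Proof.
  rewrite (legendre_expansion m _ (pow_span_legendre m) x).
  apply sum_eq. intros k _. rewrite Fcoef_S. reflexivity.
Qed.

Lemma RInt_odd (f : R -> R) a : (forall x, f (- x) = - f x) ->
  (forall x, continuous f x) -> RInt f (- a) a = 0.
Proof.
  intros Hodd Hf.
  assert (Hopp : is_RInt f (- a) a (RInt f a (- a))).
  { apply (is_RInt_Rext (fun y => opp (f (- y)))); [intro; rewrite Hodd; apply Ropp_involutive|].
    apply (is_RInt_comp_opp (V:=R_NormedModule)). rewrite Ropp_involutive.
    apply is_RInt_RInt_continuous, Hf. }
  rewrite <- (opp_RInt_swap (V:=R_CompleteNormedModule)) in Hopp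
    by (apply ex_RInt_continuous; auto).
  apply (is_RInt_unique (V:=R_CompleteNormedModule)) in Hopp.
  change (opp ?y) with (- y) in Hopp. lra.
Qed.

Lemma Fcoef_odd k m : Nat.odd (k + m) = true -> Fcoef (S k) (S m) = 0.
Proof.
  intros Hodd. rewrite Fcoef_S.
  apply Nat.odd_spec in Hodd as [p Hp].
  replace (-1) with (- (1)) by ring. apply RInt_odd; [|Rcontinuity].
  intro x. rewrite legendre_opp.
  replace ((- x) ^ m) with ((-1) ^ m * x ^ m)
    by (rewrite <- Rpow_mult_distr; f_equal; ring).
  assert (Hsign : (-1) ^ k * (-1) ^ m = -1)
    by (rewrite <- pow_add, Hp, Nat.add_1_r; apply pow_1_odd).
  transitivity ((-1) ^ k * (-1) ^ m * (legendre k x * x ^ m)); [ring|].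
  rewrite Hsign. ring.
Qed.

Definition legendre_sum (N : nat) (t x : R) : R := sum_f_R0 (fun k => legendre k x * t ^ k) N.

(* For unit vectors [e], [u] with [u . e = x], the distance from [t e] to [u]. *)
Definition cosine_dist (t x : R) : R := sqrt (1 + t ^ 2 - 2 * t * x).

Lemma cosine_dist_sqr_ge t x : Rabs t <= 1 / 2 -> -1 <= x <= 1 -> 1 / 4 <= 1 + t ^ 2 - 2 * t * x.
Proof.
  intros Ht Hx.
  assert (t * x <= Rabs t) by (destruct (Rle_dec 0 t);
    [rewrite Rabs_right by lra|rewrite Rabs_left by lra]; nra).
  rewrite <- pow2_abs. pose proof (Rabs_pos t). nra.
Qed.

Lemma cosine_dist_ge t x : Rabs t <= 1 / 2 -> -1 <= x <= 1 -> 1 / 2 <= cosine_dist t x.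
Proof.
  intros Ht Hx. unfold cosine_dist. rewrite <- (sqrt_pow2 (1 / 2)) by lra.
  apply sqrt_le_1_alt. pose proof (cosine_dist_sqr_ge t x Ht Hx). lra.
Qed.

Lemma inv_cosine_dist_le t x : Rabs t <= 1 / 2 -> -1 <= x <= 1 ->
  0 < / cosine_dist t x <= 2.
Proof.
  intros Ht Hx. pose proof (cosine_dist_ge t x Ht Hx).
  split; [apply Rinv_0_lt_compat; lra|].
  replace 2 with (/ (1 / 2)) by field. apply Rinv_le_contravar; lra.
Qed.

Lemma is_derive_poly (a : nat -> R) N t :
  is_derive (fun t => sum_f_R0 (fun k => a k * t ^ k) N) t
    (sum_f_R0 (fun k => a k * (INR k * t ^ pred k)) N).
Proof.
  rewrite <- sum_n_Reals. apply (is_derive_ext (fun t => sum_n (fun k => a k * t ^ k) N)).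
  { intro; apply sum_n_Reals. }
  apply (is_derive_sum_n (fun k t => a k * t ^ k)). intros k _.
  auto_derive; [exact I|ring].
Qed.

(* The truncation of the generating-function ODE [(1 - 2 t x + t^2) g' = (x - t) g]. *)
Lemma legendre_sum_ode N t x :
  (1 + t ^ 2 - 2 * t * x) * sum_f_R0 (fun k => legendre k x * (INR k * t ^ pred k)) N
    + (t - x) * legendre_sum N t x
  = INR (S N) * t ^ N * (t * legendre N x - legendre (S N) x).
Proof.
  unfold legendre_sum. induction N as [|N IH].
  - simpl. rewrite legendre_0, legendre_1. ring.
  - rewrite !tech5.
    transitivity ((1 + t ^ 2 - 2 * t * x)
        * sum_f_R0 (fun k => legendre k x * (INR k * t ^ pred k)) N
      + (t - x) * sum_f_R0 (fun k => legendre k x * t ^ k) N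
      + legendre (S N) x * t ^ N * ((1 + t ^ 2 - 2 * t * x) * INR (S N) + (t - x) * t));
      [simpl; ring|].
    rewrite IH. pose proof (legendre_rec (S N) x) as Hrec. simpl pred in Hrec.
    transitivity (t ^ S N * (INR (S (S N)) * t * legendre (S N) x
      - INR (S (S N)) * legendre (S (S N)) x)); [|simpl; ring].
    rewrite Hrec, !S_INR. simpl. ring.
Qed.

Lemma is_derive_legendre_sum_mul_dist N x t : Rabs t <= 1 / 2 -> -1 <= x <= 1 ->
  is_derive (fun t => legendre_sum N t x * cosine_dist t x) t
    (INR (S N) * t ^ N * (t * legendre N x - legendre (S N) x) / cosine_dist t x).
Proof.
  intros Ht Hx. pose proof (cosine_dist_sqr_ge t x Ht Hx) as Hq.
  pose proof (is_derive_poly (fun k => legendre k x) N t) as HS.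
  unfold cosine_dist. auto_derive.
  { simpl in Hq. split; [eexists; apply HS|split; [lra|exact I]]. }
  replace (Derive (fun t => legendre_sum N t x) t)
    with (sum_f_R0 (fun k => legendre k x * (INR k * t ^ pred k)) N)
    by (symmetry; apply is_derive_unique, HS).
  rewrite <- legendre_sum_ode.
  replace (1 + t * (t * 1) + - (2 * t * x)) with (1 + t ^ 2 - 2 * t * x) by ring.
  set (q := 1 + t ^ 2 - 2 * t * x) in *.
  assert (Hw : sqrt q * sqrt q = q) by (apply sqrt_sqrt; lra).
  assert (0 < sqrt q) by (apply sqrt_lt_R0; lra).
  set (w := sqrt q) in *. rewrite <- Hw. field. lra.
Qed.

Lemma legendre_sum_at_0 N x : legendre_sum N 0 x = 1.
Proof.
  unfold legendre_sum. induction N as [|N IH]; [simpl; rewrite legendre_0; ring|].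
  rewrite tech5, IH. simpl. ring.
Qed.

Lemma cosine_dist_at_0 x : cosine_dist 0 x = 1.
Proof. unfold cosine_dist. replace (1 + 0 ^ 2 - 2 * 0 * x) with 1 by ring. apply sqrt_1. Qed.

Lemma Rabs_le_between c t : Rmin 0 t <= c <= Rmax 0 t -> Rabs c <= Rabs t.
Proof.
  unfold Rmin, Rmax. intros Hc. apply Rabs_le.
  destruct (Rle_dec 0 t); [rewrite Rabs_right|rewrite Rabs_left]; lra.
Qed.

Lemma Rabs_legendre_sum_mul_dist_deriv_le N c t x :
  Rabs c <= Rabs t -> Rabs t <= 1 / 2 -> -1 <= x <= 1 ->
  Rabs (INR (S N) * c ^ N * (c * legendre N x - legendre (S N) x) / cosine_dist c x)
    <= 2 * (INR N + 1) * (3 ^ N + 3 ^ S N) * Rabs t ^ N.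
Proof.
  intros Hct Ht Hx.
  pose proof (Rabs_legendre_le N x Hx). pose proof (Rabs_legendre_le (S N) x Hx).
  assert (Hdiff : Rabs (c * legendre N x - legendre (S N) x) <= 3 ^ N + 3 ^ S N).
  { eapply Rle_trans; [apply Rabs_triang|]. rewrite Rabs_Ropp, Rabs_mult.
    assert (Rabs c * Rabs (legendre N x) <= 3 ^ N).
    { rewrite <- (Rmult_1_l (3 ^ N)). apply Rmult_le_compat; auto using Rabs_pos; lra. }
    lra. }
  assert (Hpow : Rabs (c ^ N) <= Rabs t ^ N).
  { rewrite <- RPow_abs. apply pow_incr. split; [apply Rabs_pos|exact Hct]. }
  assert (Hinv : Rabs (/ cosine_dist c x) <= 2)
    by (pose proof (inv_cosine_dist_le c x ltac:(lra) Hx); rewrite Rabs_right; lra).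
  unfold Rdiv. rewrite !Rabs_mult, Rabs_right by (apply Rle_ge, pos_INR).
  rewrite S_INR. pose proof (pos_INR N).
  pose proof (Rabs_pos (c ^ N)). pose proof (Rabs_pos (/ cosine_dist c x)).
  pose proof (Rabs_pos (c * legendre N x - legendre (S N) x)).
  transitivity ((INR N + 1) * Rabs t ^ N * (3 ^ N + 3 ^ S N) * 2); [|lra].
  repeat apply Rmult_le_compat; try lra; repeat apply Rmult_le_pos; lra.
Qed.

Lemma Rabs_legendre_sum_sub_inv_le N t x : Rabs t <= 1 / 2 -> -1 <= x <= 1 ->
  Rabs (legendre_sum N t x - / cosine_dist t x)
    <= 4 * (INR N + 1) * (3 ^ N + 3 ^ S N) * Rabs t ^ S N.
Proof.
  intros Ht Hx.
  destruct (MVT_gen (fun t => legendre_sum N t x * cosine_dist t x) 0 t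
    (fun c => INR (S N) * c ^ N * (c * legendre N x - legendre (S N) x) / cosine_dist c x))
    as [c [Hc Hmvt]].
  - intros y Hy. apply is_derive_legendre_sum_mul_dist; [|exact Hx].
    pose proof (Rabs_le_between y t ltac:(lra)). lra.
  - intros y Hy. apply continuity_pt_filterlim, (ex_derive_continuous (K:=R_AbsRing)
      (V:=R_NormedModule) (fun t => legendre_sum N t x * cosine_dist t x)).
    eexists. apply is_derive_legendre_sum_mul_dist; [|exact Hx].
    pose proof (Rabs_le_between y t Hy). lra.
  - rewrite legendre_sum_at_0, cosine_dist_at_0, Rmult_1_l, Rminus_0_r in Hmvt.
    pose proof (Rabs_legendre_sum_mul_dist_deriv_le N c t x (Rabs_le_between c t Hc) Ht Hx) as Hder.
    pose proof (inv_cosine_dist_le t x Ht Hx) as Hinv.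
    replace (legendre_sum N t x - / cosine_dist t x)
      with ((legendre_sum N t x * cosine_dist t x - 1) * / cosine_dist t x)
      by (pose proof (cosine_dist_ge t x Ht Hx); field; lra).
    set (D := INR (S N) * c ^ N * (c * legendre N x - legendre (S N) x) / cosine_dist c x) in *.
    rewrite Hmvt, !Rabs_mult, (Rabs_right (/ cosine_dist t x)) by lra.
    pose proof (Rabs_pos t). pose proof (pow_le (Rabs t) N (Rabs_pos t)).
    simpl (Rabs t ^ S N).
    transitivity (2 * (INR N + 1) * (3 ^ N + 3 ^ S N) * Rabs t ^ N * Rabs t * 2); [|lra].
    repeat apply Rmult_le_compat; try lra; repeat apply Rmult_le_pos; auto using Rabs_pos.
Qed.

Lemma Rle_0_of_le_linear e K d : 0 < d -> (forall t, 0 < t < d -> e <= K * t) -> e <= 0.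
Proof.
  intros Hd H. destruct (Rle_lt_dec e 0) as [|He]; [assumption|exfalso].
  pose proof (Rabs_pos K) as HK.
  set (t := Rmin (d / 2) (e / (2 * (Rabs K + 1)))).
  assert (Ht : 0 < t) by (apply Rmin_pos; [lra|apply Rdiv_lt_0_compat; lra]).
  assert (Htd : t < d) by (pose proof (Rmin_l (d / 2) (e / (2 * (Rabs K + 1)))); unfold t; lra).
  assert (Hte : t * (2 * (Rabs K + 1)) <= e).
  { pose proof (Rmin_r (d / 2) (e / (2 * (Rabs K + 1)))) as Hr. fold t in Hr.
    apply Rmult_le_compat_r with (r := 2 * (Rabs K + 1)) in Hr; [|lra].
    unfold Rdiv in Hr. rewrite Rmult_assoc, Rinv_l, Rmult_1_r in Hr; lra. }
  pose proof (H t (conj Ht Htd)). pose proof (Rle_abs K). nra.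
Qed.

Lemma Rabs_poly_le (a : nat -> R) N t : 0 <= t <= 1 ->
  Rabs (sum_f_R0 (fun k => a k * t ^ k) N) <= sum_f_R0 (fun k => Rabs (a k)) N.
Proof.
  intros Ht. eapply Rle_trans; [apply sum_f_R0_triangle|]. apply sum_Rle. intros k _.
  rewrite Rabs_mult, (Rabs_right (t ^ k)) by (apply Rle_ge, pow_le; lra).
  rewrite <- (Rmult_1_r (Rabs (a k))) at 2. apply Rmult_le_compat_l; [apply Rabs_pos|].
  rewrite <- (pow1 k). apply pow_incr. lra.
Qed.

Lemma poly_coef_eq_0 N (a : nat -> R) C d : 0 < d ->
  (forall t, 0 < t < d -> Rabs (sum_f_R0 (fun k => a k * t ^ k) N) <= C * t ^ S N) ->
  forall k, (k <= N)%nat -> a k = 0.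
Proof.
  revert a. induction N as [|N IH]; intros a Hd Hsmall k Hk.
  - replace k with 0%nat by lia. apply Rabs_eq_0, Rle_antisym; [|apply Rabs_pos].
    apply (Rle_0_of_le_linear _ C d Hd). intros t Ht.
    specialize (Hsmall t Ht). simpl in Hsmall. rewrite !Rmult_1_r in Hsmall. exact Hsmall.
  - assert (Hsplit : forall t, sum_f_R0 (fun k => a k * t ^ k) (S N)
        = a 0%nat + t * sum_f_R0 (fun k => a (S k) * t ^ k) N).
    { intro t. rewrite decomp_sum by lia. simpl pred. rewrite scal_sum. simpl. f_equal; [ring|].
      apply sum_eq. intros; simpl; ring. }
    set (M := sum_f_R0 (fun k => Rabs (a (S k))) N).
    assert (Ha0 : a 0%nat = 0).
    { apply Rabs_eq_0, Rle_antisym; [|apply Rabs_pos].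
      apply (Rle_0_of_le_linear _ (Rabs C + M) (Rmin d 1)); [apply Rmin_pos; lra|].
      intros t Ht.
      pose proof (Rmin_l d 1). pose proof (Rmin_r d 1).
      specialize (Hsmall t ltac:(lra)). rewrite Hsplit in Hsmall.
      pose proof (Rabs_poly_le (fun k => a (S k)) N t ltac:(lra)) as Hq.
      cbv beta in Hq. fold M in Hq.
      assert (Hpow : t ^ S (S N) <= t).
      { assert (t ^ S N <= 1) by (rewrite <- (pow1 (S N)); apply pow_incr; lra).
        change (t ^ S (S N)) with (t * t ^ S N). nra. }
      set (q := sum_f_R0 (fun k => a (S k) * t ^ k) N) in *.
      assert (Htri : Rabs (a 0%nat) <= Rabs (a 0%nat + t * q) + t * Rabs q).
      { replace (a 0%nat) with ((a 0%nat + t * q) + - (t * q)) at 1 by ring.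
        eapply Rle_trans; [apply Rabs_triang|].
        rewrite Rabs_Ropp, Rabs_mult, (Rabs_right t) by lra. lra. }
      assert (C * t ^ S (S N) <= Rabs C * t).
      { pose proof (Rle_abs C). pose proof (Rabs_pos C). pose proof (pow_le t (S (S N)) ltac:(lra)).
        apply Rle_trans with (Rabs C * t ^ S (S N));
          [apply Rmult_le_compat_r|apply Rmult_le_compat_l]; lra. }
      assert (t * Rabs q <= t * M) by (apply Rmult_le_compat_l; lra).
      lra. }
    destruct k as [|k]; [exact Ha0|].
    apply (IH (fun k => a (S k)) Hd); [|lia]. intros t Ht.
    specialize (Hsmall t Ht).
    rewrite Hsplit, Ha0, Rplus_0_l, Rabs_mult, Rabs_right in Hsmall by lra.
    apply (Rmult_le_reg_l t); [lra|]. simpl in *. lra.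
Qed.

Lemma continuous_cosine_dist t x : continuous (cosine_dist t) x.
Proof.
  unfold cosine_dist. apply (continuous_comp (fun x => 1 + t ^ 2 - 2 * t * x) sqrt);
    [Rcontinuity|apply continuous_sqrt].
Qed.

#[local] Hint Resolve continuous_cosine_dist : core.

Lemma continuous_bounded (f : R -> R) a b : a <= b ->
  (forall x, a <= x <= b -> continuous f x) -> exists M, forall x, a <= x <= b -> Rabs (f x) <= M.
Proof.
  intros Hab Hf.
  destruct (continuity_ab_maj (fun x => Rabs (f x)) a b Hab) as [x0 [Hx0 _]].
  { intros x Hx. apply continuity_pt_filterlim, continuous_Rabs_comp, Hf, Hx. }
  exists (Rabs (f x0)). exact Hx0.
Qed.

Lemma Rdiv_between_m1_1 r z : 0 < r -> -r <= z <= r -> -1 <= z / r <= 1.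
Proof.
  intros Hr Hz.
  split; [apply (Rmult_le_reg_r r)|apply (Rmult_le_reg_r r)]; auto;
    unfold Rdiv; rewrite Rmult_assoc, Rinv_l, Rmult_1_r; lra.
Qed.

Lemma sqrt_kernel_scale r t z : 0 < r ->
  sqrt ((r * t) ^ 2 + r ^ 2 - 2 * (r * t) * z) = r * cosine_dist t (z / r).
Proof.
  intros Hr.
  replace ((r * t) ^ 2 + r ^ 2 - 2 * (r * t) * z)
    with (r ^ 2 * (1 + t ^ 2 - 2 * t * (z / r))) by (field; lra).
  unfold cosine_dist. rewrite sqrt_mult_alt, sqrt_pow2 by (try apply pow2_ge_0; lra).
  reflexivity.
Qed.

Lemma legendre_moments_of_kernel (r : R) (N : nat) (f : R -> R) (a : nat -> R) :
  0 < r -> (forall z, continuous f z) ->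
  (forall s, -r < s < r ->
     RInt (fun z => r * f z / sqrt (s ^ 2 + r ^ 2 - 2 * s * z)) (-r) r
       = sum_f_R0 (fun k => a k * s ^ k) N) ->
  forall k, (k <= N)%nat -> RInt (fun z => f z * legendre k (z / r)) (-r) r = a k * r ^ k.
Proof.
  intros Hr Hf Hker.
  set (moment := fun k => RInt (fun z => f z * legendre k (z / r)) (-r) r).
  destruct (continuous_bounded f (-r) r) as [M HM]; [lra|auto|].
  set (C := 2 * r * M * (4 * (INR N + 1) * (3 ^ N + 3 ^ S N))).
  intros k Hk.
  enough (moment k - a k * r ^ k = 0) by (unfold moment in *; lra).
  apply (poly_coef_eq_0 N (fun k => moment k - a k * r ^ k) C (1 / 2)); [lra| |exact Hk].
  intros t Ht.
  assert (Htabs : Rabs t = t) by (apply Rabs_right; lra).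
  assert (Hgen : is_RInt (fun z => f z * legendre_sum N t (z / r)) (-r) r
                   (sum_f_R0 (fun k => t ^ k * moment k) N)).
  { apply (is_RInt_Rext (fun z => sum_f_R0 (fun k => t ^ k * (f z * legendre k (z / r))) N)).
    { intro z. unfold legendre_sum. rewrite scal_sum. apply sum_eq. intros; ring. }
    apply is_RInt_sum_f_R0. intros j _. apply is_RInt_Rscal, is_RInt_RInt_continuous.
    Rcontinuity. }
  assert (Hkernel : is_RInt (fun z => f z / cosine_dist t (z / r)) (-r) r
                      (sum_f_R0 (fun k => a k * r ^ k * t ^ k) N)).
  { rewrite (sum_eq _ (fun k => a k * (r * t) ^ k)) by (intros; rewrite Rpow_mult_distr; ring).
    rewrite <- Hker by (split; nra).
    rewrite (RInt_Rext_sym _ (fun z => f z / cosine_dist t (z / r)) r); [|lra|].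
    - apply (RInt_correct (V:=R_CompleteNormedModule)), ex_RInt_continuous.
      rewrite Rmin_left, Rmax_right by lra. intros z Hz. Rcontinuity.
      pose proof (cosine_dist_ge t (z / r) ltac:(lra) (Rdiv_between_m1_1 r z Hr Hz)). lra.
    - intros z Hz. rewrite sqrt_kernel_scale by exact Hr.
      pose proof (cosine_dist_ge t (z / r) ltac:(lra) (Rdiv_between_m1_1 r z Hr ltac:(lra))).
      field. lra. }
  pose proof (is_RInt_Rminus _ _ _ _ _ _ Hgen Hkernel) as Hdiff.
  replace (sum_f_R0 (fun k => (moment k - a k * r ^ k) * t ^ k) N)
    with (sum_f_R0 (fun k => t ^ k * moment k) N - sum_f_R0 (fun k => a k * r ^ k * t ^ k) N)
    by (rewrite <- minus_sum; apply sum_eq; intros; ring).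
  rewrite <- (is_RInt_unique _ _ _ _ Hdiff).
  replace (C * t ^ S N) with ((r - - r) *
    (M * (4 * (INR N + 1) * (3 ^ N + 3 ^ S N) * Rabs t ^ S N))) by (rewrite Htabs; unfold C; ring).
  apply abs_RInt_le_const; [lra|eexists; exact Hdiff|].
  intros z Hz. unfold Rdiv. rewrite <- Rmult_minus_distr_l, Rabs_mult.
  apply Rmult_le_compat; auto using Rabs_pos.
  apply Rabs_legendre_sum_sub_inv_le; [lra|apply Rdiv_between_m1_1; assumption].
Qed.

Lemma RInt_pow_mul_eq_legendre_moments (r : R) (m : nat) (f : R -> R) :
  0 < r -> (forall z, continuous f z) ->
  RInt (fun z => z ^ m * f z) (-r) r = r ^ m * sum_f_R0 (fun k =>
    (2 * INR k + 1) / 2 * Fcoef (S k) (S m) * RInt (fun z => f z * legendre k (z / r)) (-r) r) m.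
Proof.
  intros Hr Hf. rewrite scal_sum. apply is_RInt_unique.
  apply (is_RInt_Rext (fun z => sum_f_R0 (fun k =>
    r ^ m * ((2 * INR k + 1) / 2 * Fcoef (S k) (S m)) * (f z * legendre k (z / r))) m)).
  { intro z. replace (z ^ m) with (r ^ m * (z / r) ^ m)
      by (rewrite <- Rpow_mult_distr; f_equal; field; lra).
    rewrite (pow_legendre_expansion m (z / r)), scal_sum, (Rmult_comm (sum_f_R0 _ _)), scal_sum.
    apply sum_eq. intros; ring. }
  rewrite (sum_eq _ (fun k => r ^ m * ((2 * INR k + 1) / 2 * Fcoef (S k) (S m))
    * RInt (fun z => f z * legendre k (z / r)) (-r) r)) by (intros; ring).
  apply is_RInt_sum_f_R0. intros k _. apply is_RInt_Rscal, is_RInt_RInt_continuous. Rcontinuity.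
Qed.

Lemma sum_f_R0_even_odd p (g : nat -> R) : sum_f_R0 g (S (2 * p)) =
  sum_f_R0 (fun j => g (2 * j)%nat) p + sum_f_R0 (fun j => g (S (2 * j))) p.
Proof.
  induction p as [|p IH]; [simpl; ring|].
  replace (S (2 * S p)) with (S (S (S (2 * p)))) by lia.
  rewrite (tech5 g (S (S (2 * p)))), (tech5 g (S (2 * p))), IH,
    (tech5 (fun j => g (2 * j)%nat) p), (tech5 (fun j => g (S (2 * j))) p).
  replace (2 * S p)%nat with (S (S (2 * p))) by lia. ring.
Qed.

Lemma step2_sum_delta m (f : nat -> R) : (forall k, Nat.odd (k + m) = true -> f (S k) = 0) ->
  step2_sum (delta m) (m + 1) f = sum_f_R0 (fun k => f (S k)) m.
Proof.
  intros Hodd. unfold step2_sum.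
  destruct (Nat.Even_or_Odd m) as [[p ->]|[p ->]].
  - replace (delta (2 * p)) with 1%nat by (unfold delta; rewrite Nat.even_mul; reflexivity).
    replace (2 * p + 1 - 1)%nat with (p * 2)%nat by lia. rewrite Nat.div_mul by lia.
    assert (Hlast : f (S (S (2 * p))) = 0)
      by (apply Hodd, Nat.odd_spec; exists (2 * p)%nat; lia).
    transitivity (sum_f_R0 (fun k => f (S k)) (S (2 * p))); [|rewrite tech5, Hlast; ring].
    rewrite sum_f_R0_even_odd, (sum_eq_R0 (fun j => f (S (S (2 * j))))), Rplus_0_r.
    + apply sum_eq. intros; reflexivity.
    + intros j _. apply Hodd, Nat.odd_spec. exists (j + p)%nat. lia.
  - replace (delta (2 * p + 1)) with 2%nat
      by (unfold delta; rewrite Nat.even_add, Nat.even_mul; reflexivity).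
    replace (2 * p + 1 + 1 - 2)%nat with (p * 2)%nat by lia. rewrite Nat.div_mul by lia.
    replace (2 * p + 1)%nat with (S (2 * p)) by lia.
    rewrite sum_f_R0_even_odd, (sum_eq_R0 (fun j => f (S (2 * j)))), Rplus_0_l.
    + apply sum_eq. intros; reflexivity.
    + intros j _. apply Hodd, Nat.odd_spec. exists (j + p)%nat. lia.
Qed.

Theorem theorem2
  (r eps0 : R) (n : nat) (b : nat -> R) (phi0 sigma : R -> R)
  (hr : 0 < r) (heps : 0 < eps0)
  (hphi : forall s, -r < s < r ->
     - phi0 s = sum_f_R0 (fun k => b (S k) * s ^ k) n)
  (hdeg : b (S n) <> 0)
  (hbz : forall i, (n + 1 < i)%nat -> b i = 0)
  (hsig : exists c : nat -> R, forall z, -r <= z <= r ->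
     sigma z = sum_f_R0 (fun k => c k * z ^ k) n)
  (heq : forall s, -r < s < r ->
     RInt (fun z => r * sigma z / sqrt (s ^ 2 + r ^ 2 - 2 * s * z)) (-r) r
       = - 2 * eps0 * phi0 s) :
  forall m : nat,
    dipole r sigma m =
      2 * PI * eps0 * r ^ (m + 1) *
        step2_sum (delta m) (m + 1)
          (fun i => (2 * INR i - 1) * r ^ (i - 1) * Fcoef i (m + 1) * b i).
Proof.
  intros m. destruct hsig as [c Hc].
  set (p := fun z => sum_f_R0 (fun k => c k * z ^ k) n).
  assert (Hp : forall z, continuous p z) by (unfold p; Rcontinuity).
  assert (Hsp : forall z, -r < z < r -> sigma z = p z) by (intros z Hz; apply Hc; lra).
  assert (Hkernel : forall s, -r < s < r ->
    RInt (fun z => r * p z / sqrt (s ^ 2 + r ^ 2 - 2 * s * z)) (-r) r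
      = sum_f_R0 (fun k => 2 * eps0 * b (S k) * s ^ k) (n + m)).
  { intros s Hs.
    rewrite (sum_f_R0_zero_tail _ n (n + m)); [|lia|intros k Hk; rewrite hbz by lia; ring].
    transitivity (2 * eps0 * - phi0 s).
    - rewrite <- (RInt_Rext_sym (fun z => r * sigma z / sqrt (s ^ 2 + r ^ 2 - 2 * s * z)))
        by (lra || (intros z Hz; rewrite Hsp by exact Hz; reflexivity)).
      rewrite heq by exact Hs. lra.
    - rewrite hphi, scal_sum by exact Hs. apply sum_eq. intros; ring. }
  pose proof (legendre_moments_of_kernel r (n + m) p _ hr Hp Hkernel) as Hmoment.
  unfold dipole.
  rewrite (RInt_Rext_sym _ (fun z => z ^ m * p z))
    by (lra || (intros z Hz; rewrite Hsp by exact Hz; reflexivity)).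
  rewrite RInt_pow_mul_eq_legendre_moments by assumption.
  rewrite step2_sum_delta by (intros k Hk; rewrite Nat.add_1_r, Fcoef_odd by exact Hk; ring).
  rewrite !scal_sum. apply sum_eq. intros k Hk.
  rewrite Hmoment by lia. replace (S k - 1)%nat with k by lia.
  rewrite Nat.add_1_r, S_INR. simpl. field.
Qed.
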